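(* Let $\Omega\subset\mathbb{R}^2$ be compact with non-empty interior and let $G=\frac{1}{\mathrm{Area}(\Omega)}\int_\Omega y\,dy$ be its barycenter. Then for every $\varepsilon>0$ there exists $H>0$ such that for every $h\ge H$, every solid angle center of $\Omega$ of height $h$ lies at distance less than $\varepsilon$ from $G$. In other words, solid angle centers of height $h$ converge to the barycenter of $\Omega$ as $h\to+\infty$.
   Context: For a compact $\Omega\subset\mathbb{R}^2$ with non-empty interior, $h>0$ and $x\in\mathbb{R}^2$, $A_\Omega^{(h)}(x)=\int_\Omega \frac{h}{(|y-x|^2+h^2)^{3/2}}\,dy$. A point $x$ is a solid angle center of $\Omega$ of height $h$ if it maximizes $A_\Omega^{(h)}$ over $\mathbb{R}^2$. $\mathrm{Area}$ denotes Lebesgue measure. *)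

From HB Require Import structures.
From mathcomp Require Import all_boot all_order all_algebra.
From mathcomp Require Import all_classical all_reals all_analysis.
Set Implicit Arguments. Unset Strict Implicit. Unset Printing Implicit Defensive.
Import Order.TTheory GRing.Theory Num.Theory.
Import numFieldNormedType.Exports.
Local Open Scope classical_set_scope.
Local Open Scope ring_scope.

Definition leb2 (R : realType) :=
  ((@lebesgue_measure R) \x (@lebesgue_measure R))%E.

Definition sqdist2 (R : realType) (x y : R * R) : R :=
  (y.1 - x.1) ^+ 2 + (y.2 - x.2) ^+ 2.
Definition dist2 (R : realType) (x y : R * R) : R := Num.sqrt (sqdist2 x y).

Definition area (R : realType) (Om : set (R * R)) : R := fine (@leb2 R Om).

Definition barycenter (R : realType) (Om : set (R * R)) : R * R :=
  ((area Om)^-1 * Rintegral (@leb2 R) Om (fun y => y.1),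
   (area Om)^-1 * Rintegral (@leb2 R) Om (fun y => y.2)).

Definition solid_angle (R : realType) (Om : set (R * R)) (h : R) (x : R * R) : R :=
  Rintegral (@leb2 R) Om (fun y => h / ((sqdist2 x y + h ^+ 2) `^ (3 / 2))).

Definition solid_angle_center (R : realType) (Om : set (R * R)) (h : R) (x : R * R) :=
  forall z : R * R, solid_angle Om h z <= solid_angle Om h x.

(* The second moment Q(x) = \int_Om |x - y|^2 dy satisfies the parallel axis identity
   Q(x) = Q(G) + Area |x - G|^2, so it is minimal exactly at the barycenter G, and for
   large h we have A^(h)(x) = h^-2 Area - 3/2 h^-4 Q(x) + O(h^-6), the error being uniform
   while Om stays at bounded distance from x.  Comparing A(x) >= A(G) then forces
   |x - G|^2 = O(h^-2).  A maximiser x far from G is impossible: every point of Om is then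
   at squared distance at least m > Q(G) / Area from x, and the first two terms already
   give A(x) < A(G) once h is large. *)

From HB Require Import structures.
From mathcomp Require Import all_boot all_order all_algebra.
From mathcomp Require Import all_classical all_reals all_analysis.
From mathcomp Require Import ring lra.
Import Order.TTheory GRing.Theory Num.Theory.
Import numFieldNormedType.Exports.
Local Open Scope classical_set_scope.
Local Open Scope ring_scope.
Set Implicit Arguments. Unset Strict Implicit.

Section field_facts.
Variable R : numFieldType.

Lemma ler_of_eq_sub (x y u v : R) : v - u = y - x -> x <= y -> u <= v.
Proof. by move=> e xy; rewrite -subr_ge0 e subr_ge0. Qed.

Lemma exprVn_double (h : R) (n : nat) : h ^- (2 * n)%N = h ^-2 ^+ n.
Proof. by rewrite exprVn -exprM. Qed.

End field_facts.

Section solid_angle_kernel.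
Variable R : realType.
Implicit Types h u v w : R.

Definition solid_angle_kernel h u : R := h / ((u + h ^+ 2) `^ (3 / 2)).

(* Writing [w ^+ 2 = 1 + s], these say that [(1 + s) `^ (- 3/2)] lies between
   [1 - 3/2 s] and [1 - 3/2 s + 2 s ^+ 2] for [s >= 0]. *)
Lemma taylor_lower_le1 w : 1 <= w -> (1 - 3/2 * (w ^+ 2 - 1)) * w ^+ 3 <= 1.
Proof.
move=> w1; set v := w - 1; have v0 : 0 <= v by rewrite subr_ge0.
have -> : w = 1 + v by rewrite /v; ring.
rewrite -subr_ge0.
have -> : 1 - (1 - 3/2 * ((1 + v) ^+ 2 - 1)) * (1 + v) ^+ 3 =
    v ^+ 2 * (15/2 + 25/2 * v + 15/2 * v ^+ 2 + 3/2 * v ^+ 3) by field.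
by rewrite mulr_ge0 ?sqr_ge0 // !addr_ge0 // mulr_ge0 // exprn_ge0.
Qed.

Lemma taylor_upper_ge1 w : 1 <= w ->
  1 <= (1 - 3/2 * (w ^+ 2 - 1) + 2 * (w ^+ 2 - 1) ^+ 2) * w ^+ 3.
Proof.
move=> w1; set v := w - 1; have v0 : 0 <= v by rewrite subr_ge0.
have -> : w = 1 + v by rewrite /v; ring.
rewrite -subr_ge0.
have -> : (1 - 3/2 * ((1 + v) ^+ 2 - 1) + 2 * ((1 + v) ^+ 2 - 1) ^+ 2) * (1 + v) ^+ 3 - 1
    = v ^+ 2 * (1/2 + 39/2 * v + 85/2 * v ^+ 2 + 73/2 * v ^+ 3 + 14 * v ^+ 4
                + 2 * v ^+ 5) by field.
by rewrite mulr_ge0 ?sqr_ge0 // !addr_ge0 // mulr_ge0 // exprn_ge0.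
Qed.

Lemma solid_angle_kernel_rescale h u : 0 < h -> 0 <= u ->
  exists2 w, 1 <= w &
    u = h ^+ 2 * (w ^+ 2 - 1) /\ solid_angle_kernel h u = h ^-2 / w ^+ 3.
Proof.
move=> h0 u0; have hu0 : 0 < u + h ^+ 2 by rewrite ltr_wpDl // exprn_gt0.
pose w := Num.sqrt (u + h ^+ 2) / h.
have hw : h * w = Num.sqrt (u + h ^+ 2) by rewrite /w mulrC divfK ?gt_eqF.
have hw2 : (h * w) ^+ 2 = u + h ^+ 2 by rewrite hw sqr_sqrtr // ltW.
have w1 : 1 <= w.
  rewrite /w ler_pdivlMr // mul1r -[X in X <= _](ger0_norm (ltW h0)) -sqrtr_sqr.
  by apply: ler_wsqrtr; rewrite -subr_ge0 addrK.
have w0 : 0 < w := lt_le_trans ltr01 w1.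
exists w => //; split; first by rewrite mulrBr mulr1 -exprMn hw2 addrK.
rewrite /solid_angle_kernel (_ : 3 / 2 = 1 + 2^-1); last by field.
rewrite powRD ?powRr1 ?powR12_sqrt ?ltW //; last first.
  by apply/implyP => _; rewrite gt_eqF.
rewrite -hw -hw2; field; by rewrite ?gt_eqF.
Qed.

Lemma solid_angle_kernel_lower h u : 0 < h -> 0 <= u ->
  h ^-2 - 3/2 * u * h ^-4 <= solid_angle_kernel h u.
Proof.
move=> h0 u0; have [w w1 [-> ->]] := solid_angle_kernel_rescale h0 u0.
have -> : h ^-2 - 3/2 * (h ^+ 2 * (w ^+ 2 - 1)) * h ^-4 =
    h ^-2 * (1 - 3/2 * (w ^+ 2 - 1)) by field; rewrite gt_eqF.
rewrite ler_pM2l ?invr_gt0 ?exprn_gt0 //.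
by rewrite -[w ^-3]div1r ler_pdivlMr ?exprn_gt0 ?taylor_lower_le1 ?(lt_le_trans ltr01).
Qed.

Lemma solid_angle_kernel_upper h u : 0 < h -> 0 <= u ->
  solid_angle_kernel h u <= h ^-2 - 3/2 * u * h ^-4 + 2 * u ^+ 2 * h ^-6.
Proof.
move=> h0 u0; have [w w1 [-> ->]] := solid_angle_kernel_rescale h0 u0.
have -> : h ^-2 - 3/2 * (h ^+ 2 * (w ^+ 2 - 1)) * h ^-4
    + 2 * (h ^+ 2 * (w ^+ 2 - 1)) ^+ 2 * h ^-6
    = h ^-2 * (1 - 3/2 * (w ^+ 2 - 1) + 2 * (w ^+ 2 - 1) ^+ 2).
  by field; rewrite gt_eqF.
rewrite ler_pM2l ?invr_gt0 ?exprn_gt0 //.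
by rewrite -[w ^-3]div1r ler_pdivrMr ?exprn_gt0 ?taylor_upper_ge1 ?(lt_le_trans ltr01).
Qed.

Lemma solid_angle_kernel_ge0 h u : 0 < h -> 0 <= solid_angle_kernel h u.
Proof. by move=> h0; rewrite divr_ge0 ?powR_ge0 ?ltW. Qed.

Lemma solid_angle_kernel_nonincreasing h u v : 0 < h -> 0 <= u -> u <= v ->
  solid_angle_kernel h v <= solid_angle_kernel h u.
Proof.
move=> h0 u0 uv; have v0 := le_trans u0 uv.
rewrite ler_pM2l // lef_pV2 ?posrE ?powR_gt0 ?ltr_wpDl ?exprn_gt0 //.
by rewrite ge0_ler_powR ?nnegrE ?addr_ge0 ?sqr_ge0 // lerD2r.
Qed.

Lemma measurable_solid_angle_kernel h (f : R * R -> R) : 0 < h ->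
  measurable_fun setT f -> measurable_fun setT (fun y => solid_angle_kernel h (f y)).
Proof.
move=> h0 mf; rewrite (_ : (fun y => _) = fun y => h * (f y + h ^+ 2) `^ (- (3/2))).
  apply: measurable_realfun.measurable_funM; first exact: measurable_cst.
  apply: measurableT_comp (measurable_realfun.measurable_powR _) _.
  exact: measurable_realfun.measurable_funD mf (measurable_cst _).
by apply: funext => y; rewrite /solid_angle_kernel powRN.
Qed.

End solid_angle_kernel.

Section plane.
Variable R : realType.
Implicit Types (x y z : R * R) (Om : set (R * R)).
Local Notation mu := (@leb2 R).

Lemma sqdist2_ge0 x y : 0 <= sqdist2 x y.
Proof. by rewrite addr_ge0 ?sqr_ge0. Qed.

Lemma sqdist2C x y : sqdist2 x y = sqdist2 y x.
Proof. by rewrite /sqdist2; ring. Qed.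

Lemma sqdist2_le_via x y z : sqdist2 x y <= 2 * sqdist2 x z + 2 * sqdist2 z y.
Proof.
rewrite /sqdist2 -subr_ge0.
have -> : 2 * ((z.1 - x.1) ^+ 2 + (z.2 - x.2) ^+ 2) + 2 * ((y.1 - z.1) ^+ 2 + (y.2 - z.2) ^+ 2)
    - ((y.1 - x.1) ^+ 2 + (y.2 - x.2) ^+ 2)
    = (2 * z.1 - x.1 - y.1) ^+ 2 + (2 * z.2 - x.2 - y.2) ^+ 2 by ring.
by rewrite addr_ge0 ?sqr_ge0.
Qed.

Lemma measurable_sqdist2 x : measurable_fun setT (sqdist2 x).
Proof.
rewrite /sqdist2; apply: measurable_realfun.measurable_funD;
  apply: measurable_realfun.measurable_funX; apply: measurable_realfun.measurable_funB;
  (exact: measurable_fst || exact: measurable_snd || exact: measurable_cst).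
Qed.

Lemma dist2_lt x y (eps : R) : 0 < eps -> sqdist2 x y < eps ^+ 2 -> dist2 x y < eps.
Proof.
by move=> eps0; rewrite /dist2 -ltr_sqrt ?exprn_gt0 // sqrtr_sqr gtr0_norm.
Qed.

Lemma compact_plane_bounded Om : compact Om ->
  exists2 M : R, 0 < M & forall y, Om y -> `|y.1| <= M /\ `|y.2| <= M.
Proof.
move=> /compact_bounded[N [_ HN]]; exists (Num.max N 0 + 1).
  by rewrite ltr_wpDl // le_max lexx orbT.
move=> y Oy; have /HN/(_ y Oy) : N < Num.max N 0 + 1 by rewrite ltr_pwDr // le_max lexx.
by rewrite /= prod_normE /= ge_max => /andP.
Qed.

Lemma compact_sqdist2_bounded Om x : compact Om ->
  exists2 D : R, 0 <= D & forall y, Om y -> sqdist2 x y <= D.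
Proof.
move=> /compact_plane_bounded[M M0 HM].
exists ((`|x.1| + M) ^+ 2 + (`|x.2| + M) ^+ 2); first by rewrite addr_ge0 ?sqr_ge0.
move=> y /HM[y1 y2]; rewrite /sqdist2.
apply: lerD; rewrite -real_normK ?num_real // lerXn2r ?nnegrE ?addr_ge0 ?(ltW M0) //;
  by apply: le_trans (ler_normB _ _) _; rewrite addrC lerD2l.
Qed.

Lemma measurable_open_rectangle (a b c d : R) : measurable (`]a, b[ `*` `]c, d[).
Proof. by apply: measurableX; exact: measurable_itv. Qed.

Definition rat_square (q : rat * rat * rat) : set (R * R) :=
  `]ratr q.1.1 - ratr q.2, ratr q.1.1 + ratr q.2[ `*`
  `]ratr q.1.2 - ratr q.2, ratr q.1.2 + ratr q.2[.

(* An open set is the countable union of the rational open squares it contains. *)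
Lemma open_measurable_plane (U : set (R * R)) : open U -> measurable U.
Proof.
move=> oU.
pose F q := if pselect (rat_square q `<=` U) then rat_square q else set0.
have -> : U = \bigcup_q F q.
  apply/seteqP; split=> [p Up|p [q _]]; last first.
    by rewrite /F; case: (pselect (rat_square q `<=` U)) => [qU /qU|].
  have /nbhs_ballP[e /= e0 eU] := oU p Up.
  have [r /itvP rr] : exists r : rat, ratr r \in `]0, e / 2[.
    by apply: rat_in_itvoo; rewrite divr_gt0.
  have [a /itvP ra] : exists a : rat, ratr a \in `]p.1 - ratr r, p.1[.
    by apply: rat_in_itvoo; rewrite ltrBlDr ltrDl rr.
  have [b /itvP rb] : exists b : rat, ratr b \in `]p.2 - ratr r, p.2[.
    by apply: rat_in_itvoo; rewrite ltrBlDr ltrDl rr.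
  have r0 : 0 < ratr r :> R by rewrite rr.
  have re : ratr r < e / 2 by rewrite rr.
  have [a1 a2] : p.1 - ratr r < ratr a /\ ratr a < p.1 by rewrite !ra.
  have [b1 b2] : p.2 - ratr r < ratr b /\ ratr b < p.2 by rewrite !rb.
  have qU : rat_square (a, b, r) `<=` U.
    move=> z [/=]; rewrite !in_itv /= => /andP[? ?] /andP[? ?]; apply: eU.
    by split; rewrite /ball /= distrC ltr_distl; apply/andP; split; lra.
  exists (a, b, r) => //; rewrite /F; destruct pselect => //=.
  by split; rewrite /= in_itv /=; apply/andP; split; lra.
apply: countable_bigcupT_measurable => [|q]; first exact: countableP.
by rewrite /F; destruct pselect => //=; exact: measurable_open_rectangle.
Qed.

Lemma compact_measurable_plane Om : compact Om -> measurable Om.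
Proof.
move=> cO; rewrite -(setCK Om); apply: measurableC; apply: open_measurable_plane.
by rewrite openC; apply: compact_closed => //; exact: norm_hausdorff.
Qed.

Lemma leb2_rectangle (a b c d : R) : a < b -> c < d ->
  mu (`]a, b[ `*` `]c, d[) = ((b - a) * (d - c))%:E.
Proof.
have itv (u v : R) : u < v -> lebesgue_measure (`]u, v[%classic : set R) = (v - u)%:E.
  by move=> uv; rewrite lebesgue_measure_itv /= lte_fin uv -EFinD.
move=> ab cd; rewrite /leb2 product_measure1E ?EFinM; try exact: measurable_itv.
by rewrite -itv // -itv.
Qed.

Lemma compact_leb2_lty Om : compact Om -> (mu Om < +oo)%E.
Proof.
move=> cO; have [M M0 HM] := compact_plane_bounded cO.
set S := `]- (M + 1), M + 1[ `*` `]- (M + 1), M + 1[.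
have OmS : Om `<=` S.
  move=> y /HM[]; rewrite !ler_norml => /andP[? ?] /andP[? ?].
  by split; rewrite /= in_itv /=; apply/andP; split; lra.
apply: (@le_lt_trans _ _ (mu S)); last by rewrite leb2_rectangle ?ltey //; lra.
apply: le_measure => //; rewrite inE; first exact: compact_measurable_plane.
exact: measurable_open_rectangle.
Qed.

Lemma area_gt0 Om : compact Om -> Om° !=set0 -> 0 < area Om.
Proof.
move=> cO [p /= /nbhs_ballP[e /= e0 eO]].
set S := `]p.1 - e, p.1 + e[ `*` `]p.2 - e, p.2 + e[.
have SOm : S `<=` Om.
  move=> z [/=]; rewrite !in_itv /= => /andP[? ?] /andP[? ?]; apply: eO.
  by split; rewrite /ball /= distrC ltr_distl; apply/andP; split; lra.
rewrite /area fine_gt0 // compact_leb2_lty // andbT.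
apply: (@lt_le_trans _ _ (mu S)); first by rewrite leb2_rectangle ?lte_fin ?mulr_gt0; lra.
apply: le_measure => //; rewrite inE; first exact: measurable_open_rectangle.
exact: compact_measurable_plane.
Qed.

End plane.

Section second_moment.
Variable R : realType.
Local Notation mu := (@leb2 R).
Variable Om : set (R * R).
Hypotheses (cOm : compact Om) (area_Om_gt0 : 0 < area Om).

(* [mOm] is stated for the default product display, so lemmas receiving it need
   [mu] to be given first. *)
Let mOm : measurable Om := compact_measurable_plane cOm.
Let fin_mu_Om : (mu Om < +oo)%E := compact_leb2_lty cOm.
Let integrable (f : R * R -> R) := mu.-integrable Om (EFin \o f).

Definition second_moment (x : R * R) : R := Rintegral mu Om (fun y => sqdist2 x y).

Lemma bounded_integrable (f : R * R -> R) : measurable_fun setT f ->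
  (exists K, forall y, Om y -> `|f y| <= K) -> integrable f.
Proof.
move=> mf [K HK]; apply: measurable_bounded_integrable => //.
  exact: measurable_funS mf.
exists K; split; first exact: num_real.
by move=> M KM y Oy; rewrite /= (le_trans (HK _ Oy)) // ltW.
Qed.

Lemma integrable_cst (c : R) : integrable (fun=> c).
Proof. by apply: bounded_integrable; [exact: measurable_cst | exists `|c|]. Qed.

Lemma integrable_fst : integrable (fun y => y.1).
Proof.
have [M _ HM] := compact_plane_bounded cOm.
by apply: bounded_integrable; [exact: measurable_fst | exists M => y /HM[]].
Qed.

Lemma integrable_snd : integrable (fun y => y.2).
Proof.
have [M _ HM] := compact_plane_bounded cOm.
by apply: bounded_integrable; [exact: measurable_snd | exists M => y /HM[]].
Qed.

Lemma integrable_sqdist2 x : integrable (sqdist2 x).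
Proof.
have [D _ HD] := compact_sqdist2_bounded x cOm.
apply: bounded_integrable; last by exists D => y /HD; rewrite ger0_norm ?sqdist2_ge0.
exact: measurable_sqdist2.
Qed.

Lemma integrable_solid_angle_kernel h x : 0 < h ->
  integrable (fun y => solid_angle_kernel h (sqdist2 x y)).
Proof.
move=> h0; apply: bounded_integrable.
  by apply: measurable_solid_angle_kernel => //; exact: measurable_sqdist2.
exists (solid_angle_kernel h 0) => y _; rewrite ger0_norm ?solid_angle_kernel_ge0 //.
exact: solid_angle_kernel_nonincreasing (sqdist2_ge0 _ _).
Qed.

Lemma integrableD_real f g : integrable f -> integrable g ->
  integrable (fun y => f y + g y).
Proof.
by move=> fi gi; have := @integrableD _ _ _ mu _ mOm _ _ fi gi; apply: eq_integrable.
Qed.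

Lemma integrableZl_real c f : integrable f -> integrable (fun y => c * f y).
Proof.
by move=> fi; have := @integrableZl _ _ _ mu _ mOm c _ fi; apply: eq_integrable.
Qed.

Lemma integrable_affine c0 c1 c2 : integrable (fun y => c0 + (c1 * y.1 + c2 * y.2)).
Proof.
apply: integrableD_real; first exact: integrable_cst.
by apply: integrableD_real; apply: integrableZl_real;
  [exact: integrable_fst | exact: integrable_snd].
Qed.

Local Notation G := (barycenter Om).

Lemma Rintegral_affine c0 c1 c2 :
  Rintegral mu Om (fun y => c0 + (c1 * y.1 + c2 * y.2))
  = (c0 + (c1 * G.1 + c2 * G.2)) * area Om.
Proof.
have i1 := integrableZl_real c1 integrable_fst.
have i2 := integrableZl_real c2 integrable_snd.
rewrite (RintegralD (mu:=mu) mOm (integrable_cst c0) (integrableD_real i1 i2)).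
rewrite (RintegralD (mu:=mu) mOm i1 i2) Rintegral_cst //.
rewrite (@RintegralZl _ _ _ mu Om fst) ?(@RintegralZl _ _ _ mu Om snd) //;
  [|exact: integrable_snd | exact: integrable_fst].
by rewrite /barycenter /area /=; field; rewrite gt_eqF.
Qed.

Lemma second_moment_parallel_axis x :
  second_moment x = second_moment G + area Om * sqdist2 x G.
Proof.
pose c0 := x.1 ^+ 2 + x.2 ^+ 2 - G.1 ^+ 2 - G.2 ^+ 2.
rewrite /second_moment (@eq_Rintegral _ _ _ mu Om
  (fun y => sqdist2 G y + (c0 + (2 * (G.1 - x.1) * y.1 + 2 * (G.2 - x.2) * y.2)))); last first.
  by move=> y _; rewrite /c0 /sqdist2; ring.
rewrite (RintegralD (mu:=mu) mOm (integrable_sqdist2 G) (integrable_affine _ _ _)) Rintegral_affine.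
by rewrite /c0 /sqdist2; ring.
Qed.

Lemma Rintegral_sqdist2_affine x al be :
  Rintegral mu Om (fun y => al + be * sqdist2 x y) = al * area Om + be * second_moment x.
Proof.
have ibe := integrableZl_real be (integrable_sqdist2 x).
rewrite (RintegralD (mu:=mu) mOm (integrable_cst al) ibe) Rintegral_cst //.
by rewrite (@RintegralZl _ _ _ mu Om (sqdist2 x)) //; exact: integrable_sqdist2.
Qed.

Lemma solid_angle_ge h x : 0 < h ->
  h ^-2 * area Om - 3/2 * h ^-4 * second_moment x <= solid_angle Om h x.
Proof.
move=> h0; have -> : h ^-2 * area Om - 3/2 * h ^-4 * second_moment x =
    Rintegral mu Om (fun y => h ^-2 + (- (3/2) * h ^-4) * sqdist2 x y).
  by rewrite Rintegral_sqdist2_affine; ring.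
apply: le_Rintegral => //.
- apply: integrableD_real; first exact: integrable_cst.
  exact/integrableZl_real/integrable_sqdist2.
- exact: integrable_solid_angle_kernel.
move=> y _; rewrite -/(solid_angle_kernel h (sqdist2 x y)).
apply: le_trans (solid_angle_kernel_lower h0 (sqdist2_ge0 x y)); lra.
Qed.

Lemma solid_angle_le_near h x K : 0 < h -> (forall y, Om y -> sqdist2 x y <= K) ->
  solid_angle Om h x <=
    (h ^-2 + 2 * K ^+ 2 * h ^-6) * area Om - 3/2 * h ^-4 * second_moment x.
Proof.
move=> h0 HK; have -> : (h ^-2 + 2 * K ^+ 2 * h ^-6) * area Om - 3/2 * h ^-4 * second_moment x
    = Rintegral mu Om (fun y => (h ^-2 + 2 * K ^+ 2 * h ^-6) + (- (3/2) * h ^-4) * sqdist2 x y).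
  by rewrite Rintegral_sqdist2_affine; ring.
apply: le_Rintegral => //.
- exact: integrable_solid_angle_kernel.
- apply: integrableD_real; first exact: integrable_cst.
  exact/integrableZl_real/integrable_sqdist2.
move=> y Oy; rewrite -/(solid_angle_kernel h (sqdist2 x y)).
have u0 := sqdist2_ge0 x y.
have uK2 : sqdist2 x y ^+ 2 <= K ^+ 2.
  by rewrite lerXn2r ?nnegrE ?HK // (le_trans u0 (HK y Oy)).
have h6 : 0 <= 2 * h ^-6 by rewrite mulr_ge0 ?invr_ge0 ?exprn_ge0 ?ltW.
have uK2h := ler_wpM2l h6 uK2.
apply: le_trans (solid_angle_kernel_upper h0 u0) _; lra.
Qed.

Lemma solid_angle_le_far h x m : 0 < h -> 0 <= m -> (forall y, Om y -> m <= sqdist2 x y) ->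
  solid_angle Om h x <= (h ^-2 - 3/2 * m * h ^-4 + 2 * m ^+ 2 * h ^-6) * area Om.
Proof.
move=> h0 m0 Hm; rewrite -Rintegral_cst //.
apply: le_Rintegral => //; [exact: integrable_solid_angle_kernel | exact: integrable_cst |].
move=> y Oy; rewrite -/(solid_angle_kernel h (sqdist2 x y)).
apply: le_trans (solid_angle_kernel_upper h0 m0).
exact: solid_angle_kernel_nonincreasing (Hm y Oy).
Qed.

Lemma second_moment_ge0 x : 0 <= second_moment x.
Proof. by apply: Rintegral_ge0 => y _; exact: sqdist2_ge0. Qed.

Lemma second_moment_le x D : (forall y, Om y -> sqdist2 x y <= D) ->
  second_moment x <= D * area Om.
Proof.
move=> HD; rewrite -Rintegral_cst //.
by apply: le_Rintegral => //; [exact: integrable_sqdist2 | exact: integrable_cst].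
Qed.

Lemma solid_angle_center_near h x K : 0 < h -> solid_angle_center Om h x ->
  (forall y, Om y -> sqdist2 x y <= K) -> sqdist2 x G * h ^+ 2 <= 4/3 * K ^+ 2.
Proof.
move=> h0 cx HK.
have := le_trans (solid_angle_ge G h0) (le_trans (cx G) (solid_angle_le_near h0 HK)).
rewrite (second_moment_parallel_axis x) (exprVn_double h 2) (exprVn_double h 3).
set a := area Om; set d := sqdist2 x G; set Q := second_moment G; set t := h ^-2 => AG_le.
have t0 : 0 < t ^+ 2 * a by rewrite mulr_gt0 // exprn_gt0 // invr_gt0 exprn_gt0.
have : t ^+ 2 * a * (3/2 * d) <= t ^+ 2 * a * (2 * K ^+ 2 * t).
  by apply: ler_of_eq_sub AG_le; ring.
by rewrite ler_pM2l // ler_pdivlMr ?exprn_gt0 //; lra.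
Qed.

Lemma solid_angle_center_far h x m : 0 < h -> solid_angle_center Om h x ->
  (forall y, Om y -> m <= sqdist2 x y) -> second_moment G <= (m - 1) * area Om ->
  3 * h ^+ 2 <= 4 * m ^+ 2.
Proof.
move=> h0 cx Hm QG_le.
have m1 : 1 <= m.
  by have := le_trans (second_moment_ge0 G) QG_le; rewrite pmulr_lge0 // subr_ge0.
move: QG_le (area_Om_gt0); have := le_trans (solid_angle_ge G h0)
  (le_trans (cx G) (solid_angle_le_far h0 (le_trans ler01 m1) Hm)).
rewrite (exprVn_double h 2) (exprVn_double h 3).
set a := area Om; set Q := second_moment G; set t := h ^-2 => AG_le QG_le a0.
have : t ^+ 2 * (3/2 * (m * a - Q)) <= t ^+ 2 * (2 * m ^+ 2 * a * t).
  by apply: ler_of_eq_sub AG_le; ring.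
rewrite ler_pM2l ?exprn_gt0 ?invr_gt0 ?exprn_gt0 // ler_pdivlMr ?exprn_gt0 // => far.
have gap : a * h ^+ 2 <= (m * a - Q) * h ^+ 2.
  by rewrite ler_pM2r ?exprn_gt0 //; lra.
nra.
Qed.

End second_moment.

Unset Implicit Arguments.
Theorem theorem3p2 (R : realType) (Om : set (R * R)) :
  compact Om -> Om° !=set0 ->
  forall eps : R, 0 < eps ->
  exists H : R, 0 < H /\
    forall h : R, H <= h ->
    forall x : R * R, solid_angle_center Om h x ->
      dist2 x (barycenter Om) < eps.
Proof.
move=> cOm iOm eps eps0; have a0 := area_gt0 cOm iOm.
have [D D0 HD] := compact_sqdist2_bounded (barycenter Om) cOm.
pose m := D + 1; pose K := 10 * D + 4.
have QG_le : second_moment Om (barycenter Om) <= (m - 1) * area Om.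
  by rewrite addrK; exact: second_moment_le.
have [m1 K0] : 1 <= m /\ 0 < K by rewrite /m /K; split; lra.
have HK0 : 0 < 2 * K / eps by rewrite divr_gt0 // mulr_gt0.
exists (2 * K / eps + 2 * m); split=> [|h hH x cx]; first lra.
have h0 : 0 < h by lra.
(* With r := 4 D + 2, points of Om are within squared distance 2 r + 2 D = K of x
   when |x - G|^2 <= r, and at least r / 2 - D = m away from x otherwise. *)
have [xG_le|xG_gt] := leP (sqdist2 x (barycenter Om)) (4 * D + 2).
- have xy_le y : Om y -> sqdist2 x y <= K.
    move=> Oy; apply: le_trans (sqdist2_le_via x y (barycenter Om)) _.
    by have := HD y Oy; rewrite /K; lra.
  have dh := solid_angle_center_near cOm a0 h0 cx xy_le.
  have hK : 2 * K <= eps * h by rewrite -ler_pdivrMl //; lra.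
  by apply: dist2_lt => //; nra.
- have xy_ge y : Om y -> m <= sqdist2 x y.
    move=> Oy; have := sqdist2_le_via x (barycenter Om) y.
    by have := HD y Oy; rewrite sqdist2C /m; lra.
  have hm := solid_angle_center_far cOm a0 h0 cx xy_ge QG_le.
  have mh : 2 * m <= h by lra.
  nra.
Qed.
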